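(* Let $\Sigma$ be a Horn sequent $W,\Gamma,!\Delta\vdash Z$. If $\Sigma$ has a cut-free derivation in propositional linear logic (which can only use the rules I, L$\otimes$, R$\otimes$, L$\multimap$, L$\multimap\oplus$, L$\oplus$, L!, W!, C! listed in the context), then $\Sigma$ is derivable in Horn Linear Logic $\mathbf{HLL}$.
   Context: Positive literals are propositional variables. A simple product is a tensor product $q_1\otimes\cdots\otimes q_k$ ($k\ge 1$) of positive literals; $\otimes$ and $\oplus$ are treated as commutative and associative, so simple products correspond to nonempty finite multisets of literals, and $X\cong Y$ means $X,Y$ represent the same multiset. A Horn implication is a formula $X\multimap Y$ and a $\oplus$-Horn implication is $X\multimap(Y_1\oplus Y_2)$, where $X,Y,Y_1,Y_2$ are simple products. A Horn sequent is a sequent $W,\Gamma,!\Delta\vdash Z$ where $W,Z$ are simple products and $\Gamma,\Delta$ are finite multisets of Horn and $\oplus$-Horn implications ($!\Delta$ denotes $\{!A: A\in\Delta\}$). The linear logic rules that can occur in cut-free derivations of Horn sequents are: I: $X\vdash X$; L$\otimes$: from $\Sigma,X,Y\vdash Z$ infer $\Sigma,X\otimes Y\vdash Z$; R$\otimes$: from $\Sigma_1\vdash Z_1$ and $\Sigma_2\vdash Z_2$ infer $\Sigma_1,\Sigma_2\vdash Z_1\otimes Z_2$; L$\multimap$: from $\Sigma_1\vdash X$ and $Y,\Sigma_2\vdash Z$ infer $\Sigma_1,X\multimap Y,\Sigma_2\vdash Z$; L$\multimap\oplus$: from $\Sigma_1\vdash X$ and $(Y_1\oplus Y_2),\Sigma_2\vdash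 Z$ infer $\Sigma_1,X\multimap(Y_1\oplus Y_2),\Sigma_2\vdash Z$; L$\oplus$: from $\Sigma,Y_1\vdash Z$ and $\Sigma,Y_2\vdash Z$ infer $\Sigma,Y_1\oplus Y_2\vdash Z$; L!: from $\Sigma,A\vdash Z$ infer $\Sigma,!A\vdash Z$; W!: from $\Sigma\vdash Z$ infer $\Sigma,!A\vdash Z$; C!: from $\Sigma,!A,!A\vdash Z$ infer $\Sigma,!A\vdash Z$. $\mathbf{HLL}$ is the calculus on sequents $X,\Gamma,!\Delta\vdash Z$ ($X,Z$ simple products, $\Gamma,\Delta$ multisets of Horn/$\oplus$-Horn implications, and in the conclusion of a rule $(U\otimes V)$ in the antecedent may be identified with $U,V$) with rules: I: $X\vdash X$; L$\otimes$: from $X,\Gamma,!\Delta\vdash Z$ infer $Y,\Gamma,!\Delta\vdash Z$ where $X\cong Y$; H: $X,\,X\multimap Y\vdash Y$; M: from $X,\Gamma,!\Delta\vdash Y$ infer $(X\otimes V),\Gamma,!\Delta\vdash (Y\otimes V)$; $\oplus$-H: from $(Y_1\otimes V),\Gamma,!\Delta\vdash Z$ and $(Y_2\otimes V),\Gamma,!\Delta\vdash Z$ infer $(X\otimes V),\Gamma,X\multimap(Y_1\oplus Y_2),!\Delta\vdash Z$; L!: from $X,\Gamma,A,!\Delta\vdash Z$ infer $X,\Gamma,!A,!\Delta\vdash Z$; W!: from $X,\Gamma,!\Delta\vdash Z$ infer $X,\Gamma,!A,!\Delta\vdash Z$; C!: from $X,\Gamma,!A,!A,!\Delta\vdash Z$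 infer $X,\Gamma,!A,!\Delta\vdash Z$; Cut: from $W,\Gamma_1,!\Delta_1\vdash U$ and $U,\Gamma_2,!\Delta_2\vdash Z$ infer $W,\Gamma_1,\Gamma_2,!\Delta_1,!\Delta_2\vdash Z$. Here $A$ ranges over Horn and $\oplus$-Horn implications. *)

From Stdlib Require Export List Permutation.
Export ListNotations.

Definition lit := nat.

(* Formulas of the fragment of propositional linear logic that can occur
   in cut-free derivations of Horn sequents. *)
Inductive fml : Type :=
| Lit   : lit -> fml
| Tens  : fml -> fml -> fml
| Lolli : fml -> fml -> fml
| Plus  : fml -> fml -> fml
| Bang  : fml -> fml.

(* Cut-free derivability in propositional linear logic, using only the rules
   I, L(x), R(x), L(-o) (which includes L(-o +) as the instance B = Y1 (+) Y2),
   L(+), L!, W!, C!.  Antecedents are multisets, represented by lists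
   modulo permutation (explicit exchange rule). *)
Inductive ll : list fml -> fml -> Prop :=
| ll_ex G G' C : Permutation G G' -> ll G C -> ll G' C
| ll_I A : ll [A] A
| ll_Ltens G A B C : ll (A :: B :: G) C -> ll (Tens A B :: G) C
| ll_Rtens G1 G2 A B : ll G1 A -> ll G2 B -> ll (G1 ++ G2) (Tens A B)
| ll_Llolli G1 G2 A B C :
    ll G1 A -> ll (B :: G2) C -> ll (Lolli A B :: G1 ++ G2) C
| ll_Lplus G A B C : ll (A :: G) C -> ll (B :: G) C -> ll (Plus A B :: G) C
| ll_Lbang G A C : ll (A :: G) C -> ll (Bang A :: G) C
| ll_Wbang G A C : ll G C -> ll (Bang A :: G) C
| ll_Cbang G A C : ll (Bang A :: Bang A :: G) C -> ll (Bang A :: G) C.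

(* Simple products are represented by (nonempty) lists of literals, i.e.
   multisets up to permutation.  Their formula: q1 (x) (q2 (x) ... qk). *)
Fixpoint prodf (l : list lit) : fml :=
  match l with
  | [] => Lit 0 (* dummy: never used for well-formed (nonempty) products *)
  | [q] => Lit q
  | q :: l' => Tens (Lit q) (prodf l')
  end.

Inductive himp : Type :=
| HI : list lit -> list lit -> himp
| OI : list lit -> list lit -> list lit -> himp.

Definition wf_himp (A : himp) : Prop :=
  match A with
  | HI X Y => X <> [] /\ Y <> []
  | OI X Y1 Y2 => X <> [] /\ Y1 <> [] /\ Y2 <> []
  end.

Definition himp_fml (A : himp) : fml :=
  match A with
  | HI X Y => Lolli (prodf X) (prodf Y)
  | OI X Y1 Y2 => Lolli (prodf X) (Plus (prodf Y1) (prodf Y2))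
  end.

Definition horn_ll (W : list lit) (G D : list himp) (Z : list lit) : Prop :=
  ll (prodf W :: map himp_fml G ++ map (fun A => Bang (himp_fml A)) D) (prodf Z).

(* The calculus HLL on sequents X, Gamma, !Delta |- Z, written hll X Gamma Delta Z.
   (X (x) V) is list concatenation X ++ V; V may be empty (the rule M with
   empty V is trivial, and (+)-H needs the case V empty). Gamma and Delta are
   multisets (explicit exchange rule h_ex). *)
Inductive hll : list lit -> list himp -> list himp -> list lit -> Prop :=
| h_I X : X <> [] -> hll X [] [] X
| h_Ltens X Y G D Z : Permutation X Y -> hll X G D Z -> hll Y G D Z
| h_ex X G G' D D' Z :
    Permutation G G' -> Permutation D D' -> hll X G D Z -> hll X G' D' Z
| h_H X Y : hll X [HI X Y] [] Y
| h_M X V G D Y : hll X G D Y -> hll (X ++ V) G D (Y ++ V)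
| h_OH X V Y1 Y2 G D Z :
    hll (Y1 ++ V) G D Z -> hll (Y2 ++ V) G D Z ->
    hll (X ++ V) (OI X Y1 Y2 :: G) D Z
| h_Lbang X G D A Z : hll X (A :: G) D Z -> hll X G (A :: D) Z
| h_Wbang X G D A Z : hll X G D Z -> hll X G (A :: D) Z
| h_Cbang X G D A Z : hll X G (A :: A :: D) Z -> hll X G (A :: D) Z
| h_Cut W G1 D1 U G2 D2 Z :
    U <> [] -> hll W G1 D1 U -> hll U G2 D2 Z ->
    hll W (G1 ++ G2) (D1 ++ D2) Z.


Set Implicit Arguments.

(* Induction on the cut-free derivation, with every antecedent formula of
   Horn shape read as its HLL contribution: a simple product X contributes
   X to the antecedent product, a sum Y1 (+) Y2 contributes either summand,
   an implication A contributes A to Gamma and !A contributes A to Delta.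
   The induction hypothesis covers every reading, which gives both premises
   of the rule (+)-H when a (+)-Horn implication is applied.  Each rule of
   linear logic then becomes a short HLL derivation built with M and Cut. *)

Inductive product : fml -> list lit -> Prop :=
| product_lit q : product (Lit q) [q]
| product_tens a b X Y :
    product a X -> product b Y -> product (Tens a b) (X ++ Y).

Inductive horn_imp : fml -> himp -> Prop :=
| horn_imp_HI a b X Y :
    product a X -> product b Y -> horn_imp (Lolli a b) (HI X Y)
| horn_imp_OI a b1 b2 X Y1 Y2 :
    product a X -> product b1 Y1 -> product b2 Y2 ->
    horn_imp (Lolli a (Plus b1 b2)) (OI X Y1 Y2).

(* [hyp f X G D]: the formula [f] is read as the HLL sequent part X, G, !D. *)
Inductive hyp : fml -> list lit -> list himp -> list himp -> Prop :=
| hyp_product f X : product f X -> hyp f X [] []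
| hyp_plus_l a b X Y : product a X -> product b Y -> hyp (Plus a b) X [] []
| hyp_plus_r a b X Y : product a X -> product b Y -> hyp (Plus a b) Y [] []
| hyp_imp f h : horn_imp f h -> hyp f [] [h] []
| hyp_bang f h : horn_imp f h -> hyp (Bang f) [] [] [h].

Inductive hyps : list fml -> list lit -> list himp -> list himp -> Prop :=
| hyps_nil : hyps [] [] [] []
| hyps_cons f S X G D L GS DS :
    hyp f X G D -> hyps S L GS DS -> hyps (f :: S) (X ++ L) (G ++ GS) (D ++ DS).

Lemma product_nonempty f X : product f X -> X <> [].
Proof.
  induction 1 as [q | a b X Y _ IHX _ _]; [discriminate |].
  intros E. apply app_eq_nil in E. tauto.
Qed.

Lemma product_functional f X Y : product f X -> product f Y -> X = Y.
Proof.
  intros HX. revert Y.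
  induction HX as [q | a b X1 X2 _ IH1 _ IH2]; intros Y HY; inversion HY; subst.
  - reflexivity.
  - f_equal; auto.
Qed.

Lemma product_prodf X : X <> [] -> product (prodf X) X.
Proof.
  induction X as [| q [| r X] IH]; intros HX.
  - contradiction.
  - constructor.
  - apply (@product_tens _ _ [q]); [constructor | apply IH; discriminate].
Qed.

Lemma horn_imp_himp_fml h : wf_himp h -> horn_imp (himp_fml h) h.
Proof.
  destruct h; simpl; intros Hwf; constructor; apply product_prodf; tauto.
Qed.

Lemma hyps_product_inv f Z L G D :
  product f Z -> hyps [f] L G D -> L = Z /\ G = [] /\ D = [].
Proof.
  intros HZ HS. inversion HS as [| f' S X Gf Df L' GS DS Hf HS0]; subst.
  inversion HS0; subst. rewrite !app_nil_r.
  destruct Hf as [f X HX | | | f h Hh | f h Hh];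
    try (inversion HZ; fail); try (inversion Hh; subst; inversion HZ; fail).
  repeat split. exact (product_functional HX HZ).
Qed.

Lemma hyps_tens_inv a b S L G D : hyps (Tens a b :: S) L G D ->
  exists Xa Xb L', product a Xa /\ product b Xb /\ hyps S L' G D /\ L = Xa ++ Xb ++ L'.
Proof.
  intros HS. inversion HS as [| f S' X Gf Df L' GS DS Hf HS0]; subst.
  inversion Hf as [f X' HX | | | f h Hh |]; subst.
  - inversion HX; subst. rewrite <- app_assoc. eauto 10.
  - inversion Hh.
Qed.

Lemma hyps_plus_inv a b S L G D : hyps (Plus a b :: S) L G D ->
  exists Xa Xb L', product a Xa /\ product b Xb /\ hyps S L' G D /\
    (L = Xa ++ L' \/ L = Xb ++ L').
Proof.
  intros HS. inversion HS as [| f S' X Gf Df L' GS DS Hf HS0]; subst.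
  inversion Hf as [f X' HX | | | f h Hh |]; subst; eauto 10.
  - inversion HX.
  - inversion Hh.
Qed.

Lemma hyps_lolli_inv a b S L G D : hyps (Lolli a b :: S) L G D ->
  exists h G', horn_imp (Lolli a b) h /\ hyps S L G' D /\ G = h :: G'.
Proof.
  intros HS. inversion HS as [| f S' X Gf Df L' GS DS Hf HS0]; subst.
  inversion Hf as [f X' HX | | | |]; subst; eauto.
  inversion HX.
Qed.

Lemma hyps_bang_inv a S L G D : hyps (Bang a :: S) L G D ->
  exists h D', horn_imp a h /\ hyps S L G D' /\ D = h :: D'.
Proof.
  intros HS. inversion HS as [| f S' X Gf Df L' GS DS Hf HS0]; subst.
  inversion Hf as [f X' HX | | | f h Hh |]; subst; eauto.
  - inversion HX.
  - inversion Hh.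
Qed.

Lemma hyps_app S1 S2 L1 L2 G1 G2 D1 D2 :
  hyps S1 L1 G1 D1 -> hyps S2 L2 G2 D2 ->
  hyps (S1 ++ S2) (L1 ++ L2) (G1 ++ G2) (D1 ++ D2).
Proof.
  induction 1 as [| f S X G D L GS DS Hf _ IH]; intros H2; simpl; [exact H2 |].
  rewrite <- !app_assoc. exact (hyps_cons Hf (IH H2)).
Qed.

Lemma hyps_app_inv S1 S2 L G D : hyps (S1 ++ S2) L G D ->
  exists L1 L2 G1 G2 D1 D2,
    hyps S1 L1 G1 D1 /\ hyps S2 L2 G2 D2 /\
    L = L1 ++ L2 /\ G = G1 ++ G2 /\ D = D1 ++ D2.
Proof.
  revert L G D. induction S1 as [| f S1 IH]; intros L G D H; simpl in H.
  - exists [], L, [], G, [], D. repeat split; auto. constructor.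
  - inversion H as [| f' S' X Gf Df L' GS DS Hf HS]; subst.
    destruct (IH _ _ _ HS) as (L1 & L2 & G1 & G2 & D1 & D2 & H1 & H2 & -> & -> & ->).
    exists (X ++ L1), L2, (Gf ++ G1), G2, (Df ++ D1), D2.
    rewrite <- !app_assoc. repeat split; auto. exact (hyps_cons Hf H1).
Qed.

Lemma hyps_perm S S' : Permutation S S' -> forall L G D, hyps S' L G D ->
  exists L' G' D', hyps S L' G' D' /\
    Permutation L' L /\ Permutation G' G /\ Permutation D' D.
Proof.
  induction 1 as [| f S S' _ IH | f f' S | S S' S'' _ IH1 _ IH2]; intros L G D H.
  - exists L, G, D. auto.
  - inversion H as [| f0 S0 X Gf Df L0 GS DS Hf HS]; subst.
    destruct (IH _ _ _ HS) as (L' & G' & D' & H' & PL & PG & PD).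
    exists (X ++ L'), (Gf ++ G'), (Df ++ D').
    repeat split; auto using hyps_cons, Permutation_app_head.
  - inversion H as [| f0 S0 X Gf Df L0 GS DS Hf HS]; subst.
    inversion HS as [| f1 S1 X' Gf' Df' L1 GS' DS' Hf' HS']; subst.
    exists (X' ++ X ++ L1), (Gf' ++ Gf ++ GS'), (Df' ++ Df ++ DS').
    repeat split; auto using hyps_cons, Permutation_app_swap_app.
  - destruct (IH2 _ _ _ H) as (L1 & G1 & D1 & H1 & PL1 & PG1 & PD1).
    destruct (IH1 _ _ _ H1) as (L2 & G2 & D2 & H2 & PL2 & PG2 & PD2).
    exists L2, G2, D2. repeat split; eauto using Permutation_trans.
Qed.

Lemma hll_perm_r X G D Z Z' :
  Z <> [] -> Permutation Z Z' -> hll X G D Z -> hll X G D Z'.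
Proof.
  intros HZ P H.
  assert (HZ' : hll Z [] [] Z').
  { apply h_Ltens with Z'; [now apply Permutation_sym |].
    apply h_I. intros ->. apply HZ, Permutation_nil, Permutation_sym, P. }
  pose proof (h_Cut _ _ _ _ _ _ _ HZ H HZ') as HC.
  rewrite !app_nil_r in HC. exact HC.
Qed.

Lemma hll_frame_l V X G D Y :
  Y <> [] -> hll X G D Y -> hll (V ++ X) G D (V ++ Y).
Proof.
  intros HY H.
  apply h_Ltens with (X ++ V); [apply Permutation_app_comm |].
  apply hll_perm_r with (Y ++ V); [| apply Permutation_app_comm | now apply h_M].
  intros E. apply app_eq_nil in E. tauto.
Qed.

Lemma hll_cut_frame L1 L2 G1 G2 D1 D2 X Z :
  X <> [] -> hll L1 G1 D1 X -> hll (X ++ L2) G2 D2 Z ->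
  hll (L1 ++ L2) (G1 ++ G2) (D1 ++ D2) Z.
Proof.
  intros HX H1 H2. apply h_Cut with (X ++ L2); auto using h_M.
  intros E. apply app_eq_nil in E. tauto.
Qed.

Lemma hll_tensor L1 L2 G1 G2 D1 D2 X Y :
  X <> [] -> Y <> [] -> hll L1 G1 D1 X -> hll L2 G2 D2 Y ->
  hll (L1 ++ L2) (G1 ++ G2) (D1 ++ D2) (X ++ Y).
Proof.
  intros HX HY H1 H2. apply hll_cut_frame with X; auto using hll_frame_l.
Qed.

Lemma hll_HI X Y V G D Z :
  Y <> [] -> hll (Y ++ V) G D Z -> hll (X ++ V) (HI X Y :: G) D Z.
Proof.
  intros HY H. apply (h_Cut (X ++ V) [HI X Y] [] (Y ++ V) G D Z); auto using h_M, h_H.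
  intros E. apply app_eq_nil in E. tauto.
Qed.

Lemma hll_apply_imp L1 L2 G1 G2 D1 D2 X h Z :
  X <> [] -> hll L1 G1 D1 X -> hll (X ++ L2) (h :: G2) D2 Z ->
  hll (L1 ++ L2) (h :: G1 ++ G2) (D1 ++ D2) Z.
Proof.
  intros HX H1 H2.
  apply h_ex with (G1 ++ h :: G2) (D1 ++ D2);
    [apply Permutation_sym, Permutation_middle | reflexivity |].
  apply hll_cut_frame with X; assumption.
Qed.

Lemma ll_hll S C : ll S C ->
  forall Z, product C Z -> forall L G D, hyps S L G D -> hll L G D Z.
Proof.
  induction 1 as [S S' C P _ IH | A | S A B C _ IH | S1 S2 A B _ IH1 _ IH2
                 | S1 S2 A B C _ IH1 _ IH2 | S A B C _ IH1 _ IH2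
                 | S A C _ IH | S A C _ IH | S A C _ IH];
    intros Z HZ L G D HS.
  - destruct (hyps_perm P HS) as (L' & G' & D' & H' & PL & PG & PD).
    apply h_ex with G' D'; auto.
    apply h_Ltens with L'; auto.
  - destruct (hyps_product_inv HZ HS) as (-> & -> & ->).
    exact (h_I _ (product_nonempty HZ)).
  - destruct (hyps_tens_inv HS) as (Xa & Xb & L' & HA & HB & HS' & ->).
    exact (IH Z HZ _ _ _ (hyps_cons (hyp_product HA) (hyps_cons (hyp_product HB) HS'))).
  - inversion HZ as [| a b Za Zb HA HB]; subst.
    destruct (hyps_app_inv _ _ HS) as (L1 & L2 & G1 & G2 & D1 & D2 & H1 & H2 & -> & -> & ->).
    exact (hll_tensor (product_nonempty HA) (product_nonempty HB)
             (IH1 _ HA _ _ _ H1) (IH2 _ HB _ _ _ H2)).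
  - destruct (hyps_lolli_inv HS) as (h & G' & Hh & HS' & ->).
    destruct (hyps_app_inv _ _ HS') as (L1 & L2 & G1 & G2 & D1 & D2 & H1 & H2 & -> & -> & ->).
    inversion Hh as [a b XA Y HA HB | a b1 b2 XA Y1 Y2 HA HB1 HB2]; subst;
      (apply hll_apply_imp with XA;
       [exact (product_nonempty HA) | exact (IH1 _ HA _ _ _ H1) |]).
    + apply hll_HI; [exact (product_nonempty HB) |].
      exact (IH2 Z HZ _ _ _ (hyps_cons (hyp_product HB) H2)).
    + apply h_OH.
      * exact (IH2 Z HZ _ _ _ (hyps_cons (hyp_plus_l HB1 HB2) H2)).
      * exact (IH2 Z HZ _ _ _ (hyps_cons (hyp_plus_r HB1 HB2) H2)).
  - destruct (hyps_plus_inv HS) as (XA & XB & L' & HA & HB & HS' & [-> | ->]).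
    + exact (IH1 Z HZ _ _ _ (hyps_cons (hyp_product HA) HS')).
    + exact (IH2 Z HZ _ _ _ (hyps_cons (hyp_product HB) HS')).
  - destruct (hyps_bang_inv HS) as (h & D' & Hh & HS' & ->).
    apply h_Lbang. exact (IH Z HZ _ _ _ (hyps_cons (hyp_imp Hh) HS')).
  - destruct (hyps_bang_inv HS) as (h & D' & Hh & HS' & ->).
    apply h_Wbang. exact (IH Z HZ _ _ _ HS').
  - destruct (hyps_bang_inv HS) as (h & D' & Hh & HS' & ->).
    apply h_Cbang.
    exact (IH Z HZ _ _ _ (hyps_cons (hyp_bang Hh) (hyps_cons (hyp_bang Hh) HS'))).
Qed.

Lemma hyps_imps G : Forall wf_himp G -> hyps (map himp_fml G) [] G [].
Proof.
  induction 1 as [| h G Hh _ IH]; [constructor |].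
  exact (hyps_cons (hyp_imp (horn_imp_himp_fml _ Hh)) IH).
Qed.

Lemma hyps_bangs D :
  Forall wf_himp D -> hyps (map (fun A => Bang (himp_fml A)) D) [] [] D.
Proof.
  induction 1 as [| h D Hh _ IH]; [constructor |].
  exact (hyps_cons (hyp_bang (horn_imp_himp_fml _ Hh)) IH).
Qed.

Theorem theorem1 (W : list lit) (G D : list himp) (Z : list lit) :
  W <> [] -> Z <> [] ->
  Forall wf_himp G -> Forall wf_himp D ->
  horn_ll W G D Z ->
  hll W G D Z.
Proof.
  intros HW HZ HG HD H.
  pose proof (hyps_app (hyps_imps HG) (hyps_bangs HD)) as HGD.
  pose proof (hyps_cons (hyp_product (product_prodf HW)) HGD) as HS.
  simpl in HS. rewrite !app_nil_r in HS.
  exact (ll_hll H (product_prodf HZ) HS).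
Qed.
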